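(* Let $A \in (\mathbb{S}_{\max})^{n \times n}$, let $\gamma$ be a $\mathbb{S}_{\max}$-eigenvalue of $A$ and $B=\gamma I\ominus A$, and let $v$ be a $\mathbb{S}_{\max}$-eigenvector associated to the $\mathbb{S}_{\max}$-eigenvalue $\gamma$. \begin{enumerate} \item Assume that there exists an entry of $B^\mathrm{adj}$ which is invertible, that is $B^\mathrm{adj}_{i,j}\in \mathbb{S}_{\max}^{\vee}\setminus\{\mathbf{0}\}$ for some $i,j\in [n]$. Then, there exists $\lambda\in \mathbb{S}_{\max}^\vee\setminus\{\mathbf{0}\}$ such that $v\,\nabla\, \lambda B^\mathrm{adj}_{:,j}$. \item Assume there exists a column $j$ of $B^\mathrm{adj}$ that is non-zero and has only $\mathbb{S}_{\max}^\vee$ entries: $B^\mathrm{adj}_{:,j}\in (\mathbb{S}_{\max}^{\vee})^{n} \setminus\{\mathbf{0}\}$. Then $B^\mathrm{adj}_{:,j}$ is a $\mathbb{S}_{\max}$-eigenvector associated to the $\mathbb{S}_{\max}$-eigenvalue $\gamma$, and there exists $\lambda\in \mathbb{S}_{\max}^\vee\setminus\{\mathbf{0}\}$ such that $v= \lambda B^\mathrm{adj}_{:,j}$. \end{enumerate}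
   Context: $\mathbb{S}_{\max}$ is the symmetrized tropical semiring over a divisible totally ordered abelian group, with zero $\mathbf{0}$, unit $\mathbf{1}$, minus $\ominus$; $\mathbb{S}_{\max}^\vee$ is the set of signed elements (positive, negative, or $\mathbf{0}$); the invertible elements are $\mathbb{S}_{\max}^\vee\setminus\{\mathbf{0}\}$. The balance relation is $a\,\nabla\, b$ iff $a\ominus b$ is balanced, applied entrywise. $\det$ is the signed determinant and $(B^{\mathrm{adj}})_{ij}=(\ominus\mathbf{1})^{i+j}\det B[\hat j,\hat i]$; $B^{\mathrm{adj}}_{:,j}$ is its $j$-th column. An $\mathbb{S}_{\max}$-eigenvalue of $A$ is $\gamma\in\mathbb{S}_{\max}^\vee$ with $\det(\gamma I\ominus A)\,\nabla\,\mathbf{0}$; an associated $\mathbb{S}_{\max}$-eigenvector is $v\in(\mathbb{S}_{\max}^\vee)^n\setminus\{\mathbf{0}\}$ with $Av\,\nabla\,\gamma v$. *)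

From HB Require Import structures.
From mathcomp Require Import all_boot all_order all_algebra all_fingroup.
Set Implicit Arguments. Unset Strict Implicit. Unset Printing Implicit Defensive.
Import GRing.Theory.
Local Open Scope ring_scope.

Record DOAG := {
  dg_car : zmodType;
  dg_le : rel dg_car;
  dg_le_refl : forall a, dg_le a a;
  dg_le_anti : forall a b, dg_le a b -> dg_le b a -> a = b;
  dg_le_trans : forall a b c, dg_le a b -> dg_le b c -> dg_le a c;
  dg_le_total : forall a b, dg_le a b || dg_le b a;
  dg_le_add : forall a b c, dg_le a b -> dg_le (a + c) (b + c);
  dg_div : forall (n : nat) (a : dg_car), (0 < n)%N -> exists b, b *+ n = a
}.

Section Smax.
Variable G : DOAG.
Local Notation T := (dg_car G).
Local Notation dle := (@dg_le G).

(* The symmetrized tropical semiring S_max over G: the zero (= -oo),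
   positive elements  a, negative elements  (-) a, balanced elements a^o. *)
Inductive Smax := SZero | SPos of T | SNeg of T | SBal of T.

Definition smod (x : Smax) : T :=
  match x with SZero => 0 | SPos a | SNeg a | SBal a => a end.

Definition same_sign (x y : Smax) : bool :=
  match x, y with
  | SPos _, SPos _ | SNeg _, SNeg _ | SBal _, SBal _ => true
  | _, _ => false end.

Definition splus (x y : Smax) : Smax :=
  match x, y with
  | SZero, _ => y
  | _, SZero => x
  | _, _ =>
    let a := smod x in let b := smod y in
    if dle a b && ~~ dle b a then y
    else if dle b a && ~~ dle a b then x
    else if same_sign x y then x else SBal a
  end.

Definition stimes (x y : Smax) : Smax :=
  match x, y with
  | SZero, _ | _, SZero => SZero
  | SBal a, _ => SBal (a + smod y)
  | _, SBal b => SBal (smod x + b)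
  | SPos a, SPos b | SNeg a, SNeg b => SPos (a + b)
  | SPos a, SNeg b | SNeg a, SPos b => SNeg (a + b)
  end.

Definition sminus (x : Smax) : Smax :=
  match x with SPos a => SNeg a | SNeg a => SPos a | _ => x end.

Definition sone : Smax := SPos 0.

Definition sbalanced (x : Smax) : bool :=
  match x with SZero | SBal _ => true | _ => false end.
Definition ssigned (x : Smax) : bool :=
  match x with SBal _ => false | _ => true end.
Definition sinvertible (x : Smax) : bool :=
  match x with SPos _ | SNeg _ => true | _ => false end.

Definition sbal (x y : Smax) : bool := sbalanced (splus x (sminus y)).

Definition ssign_pow (k : nat) : Smax := if odd k then sminus sone else sone.

Definition sdet (n : nat) (M : 'M[Smax]_n) : Smax :=
  \big[splus/SZero]_(s : 'S_n)
     stimes (if odd_perm s then sminus sone else sone)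
            (\big[stimes/sone]_(i < n) M i (s i)).

Definition sadj (n : nat) (B : 'M[Smax]_n) : 'M[Smax]_n :=
  \matrix_(i < n, j < n)
    stimes (ssign_pow (i + j))
           (sdet (\matrix_(k < n.-1, l < n.-1) B (lift j k) (lift i l))).

Definition sid_scale (n : nat) (g : Smax) : 'M[Smax]_n :=
  \matrix_(i < n, j < n) if i == j then g else SZero.

Definition smsub (n : nat) (M N : 'M[Smax]_n) : 'M[Smax]_n :=
  \matrix_(i < n, j < n) splus (M i j) (sminus (N i j)).

Definition smulv (n : nat) (M : 'M[Smax]_n) (v : 'I_n -> Smax) : 'I_n -> Smax :=
  fun i => \big[splus/SZero]_(j < n) stimes (M i j) (v j).

Definition sscalev (n : nat) (g : Smax) (v : 'I_n -> Smax) : 'I_n -> Smax :=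
  fun i => stimes g (v i).

Definition sbalv (n : nat) (u w : 'I_n -> Smax) : Prop :=
  forall i, sbal (u i) (w i).

Definition is_seigenvalue (n : nat) (A : 'M[Smax]_n) (g : Smax) : Prop :=
  ssigned g /\ sbal (sdet (smsub (sid_scale n g) A)) SZero.

Definition is_seigenvector (n : nat) (A : 'M[Smax]_n) (g : Smax)
    (v : 'I_n -> Smax) : Prop :=
  (forall i, ssigned (v i)) /\ (exists i, v i <> SZero) /\
  sbalv (smulv A v) (sscalev g v).

End Smax.

Arguments SZero {G}.

(* The heart of the proof is a Cramer-type fact: if a nonzero signed vector x
   satisfies M x ∇ 0, then det M ∇ 0.  Take a permutation σ of maximal weight
   |∏ M_{k,σk}|.  If this weight is not invertible, the maximal term of det M
   is balanced.  Otherwise, for every m in the support of x, the invertible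
   term M_{σ⁻¹m,m} x_m of the balanced row σ⁻¹m must be cancelled or exceeded
   by another term M_{σ⁻¹m,m'} x_{m'} of that row; iterating m ↦ m' ends in a
   cycle of the support, and rerouting σ along it gives τ ≠ σ.  Maximality of
   σ forces each rerouted factor to be balanced or the negative of the old
   one, so either τ carries a balanced maximal term, or the term of τ is ⊖ the
   term of σ.

   For B = γI ⊖ A and an eigenvector v, replacing row j of B by the vector
   with v_k at i and ⊖v_i at k gives a matrix that still balances v; expanding
   its determinant along row j yields B^adj_{ij} v_k ∇ v_i B^adj_{kj}, which
   is the first claim with λ = v_i / B^adj_{ij}.  Row r of B B^adj_{:,j} is
   det B for r = j and a determinant with two equal rows otherwise, hence
   balanced; so a signed nonzero column of B^adj is an eigenvector, and the
   first claim becomes an equality because signed elements that balance each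
   other are equal. *)

From HB Require Import structures.
From mathcomp Require Import all_boot all_order all_algebra all_fingroup.
Set Implicit Arguments. Unset Strict Implicit. Unset Printing Implicit Defensive.
Import GRing.Theory.

Declare Scope smax_scope.
Notation "x ⊕ y" := (splus x y) (at level 50, left associativity) : smax_scope.
Notation "x ⊗ y" := (stimes x y) (at level 40, left associativity) : smax_scope.
Notation "⊖ x" := (sminus x) (at level 35, right associativity) : smax_scope.
Notation "x ∇ y" := (sbal x y) (at level 70, no associativity) : smax_scope.
Notation "𝟘" := SZero : smax_scope.
Notation "𝟙" := (sone _) : smax_scope.
Open Scope smax_scope.

Section DOAGOrder.
Variable G : DOAG.
Local Notation T := (dg_car G).
Local Notation dle := (@dg_le G).
Local Open Scope ring_scope.
Implicit Types a b c d : T.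

Lemma dle_add2r a b c : dle (a + c) (b + c) = dle a b.
Proof.
apply/idP/idP; last exact: dg_le_add.
by move/(dg_le_add (- c)); rewrite !addrK.
Qed.

Lemma dle_add2l a b c : dle (c + a) (c + b) = dle a b.
Proof. by rewrite ![c + _]addrC dle_add2r. Qed.

Lemma dle_add a b c d : dle a b -> dle c d -> dle (a + c) (b + d).
Proof.
by move=> hab hcd; apply: (dg_le_trans (b := b + c)); rewrite ?dle_add2r ?dle_add2l.
Qed.

Lemma dlt_add a b c d : ~~ dle b a -> dle c d -> ~~ dle (b + d) (a + c).
Proof.
move=> hab hcd; apply: contra hab => hle.
by rewrite -(dle_add2r _ _ c); apply: dg_le_trans hle; rewrite dle_add2l.
Qed.

Variant dle_spec a b : bool -> bool -> Prop :=
| DleLt of dle a b & ~~ dle b a : dle_spec a b true false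
| DleGt of dle b a & ~~ dle a b : dle_spec a b false true
| DleEq of a = b : dle_spec a b true true.

Lemma dleP a b : dle_spec a b (dle a b) (dle b a).
Proof.
case hab: (dle a b); case hba: (dle b a).
- by constructor; apply: dg_le_anti.
- by constructor; rewrite ?hab ?hba.
- by constructor; rewrite ?hab ?hba.
- by move: (dg_le_total a b); rewrite hab hba.
Qed.

End DOAGOrder.

(* Splits on every comparison [dg_le a b] in the goal and closes the branches
   whose order facts are inconsistent, using transitivity. *)
Ltac dle_cases :=
  repeat (match goal with |- context [dg_le ?a ?b] =>
            case: (dleP a b) => [? ?|? ?|?]; try subst end;
          rewrite /= ?andbT ?andbF //=);
  repeat match goal with
  | H1 : is_true (dg_le ?x ?y), H2 : is_true (dg_le ?y ?z) |- _ =>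
      lazymatch goal with
      | _ : is_true (dg_le x z) |- _ => fail
      | _ => have ? := dg_le_trans H1 H2
      end
  end;
  try match goal with
  | H : is_true (~~ dg_le ?x ?y), H' : is_true (dg_le ?x ?y) |- _ => by rewrite H' in H
  | H : is_true (~~ dg_le ?x ?x) |- _ => by rewrite dg_le_refl in H
  end.

Section SemiringLaws.
Variable G : DOAG.
Local Notation S := (Smax G).
Implicit Types x y z : S.

Lemma addsC x y : x ⊕ y = y ⊕ x.
Proof. by case: x; case: y => //= *; dle_cases. Qed.

Lemma add0s x : 𝟘 ⊕ x = x. Proof. by []. Qed.
Lemma adds0 x : x ⊕ 𝟘 = x. Proof. by case: x. Qed.

Lemma addsA x y z : x ⊕ (y ⊕ z) = x ⊕ y ⊕ z.
Proof. by case: x; case: y; case: z => //= *; rewrite /splus /=; dle_cases. Qed.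

Lemma mulsC x y : x ⊗ y = y ⊗ x.
Proof. by case: x => [|a|a|a]; case: y => [|b|b|b] //=; rewrite addrC. Qed.

Lemma mul0s x : 𝟘 ⊗ x = 𝟘. Proof. by []. Qed.
Lemma muls0 x : x ⊗ 𝟘 = 𝟘. Proof. by case: x. Qed.
Lemma mul1s x : 𝟙 ⊗ x = x. Proof. by case: x => //= a; rewrite add0r. Qed.
Lemma muls1 x : x ⊗ 𝟙 = x. Proof. by rewrite mulsC mul1s. Qed.

Lemma mulsA x y z : x ⊗ (y ⊗ z) = x ⊗ y ⊗ z.
Proof. by case: x; case: y; case: z => //= *; rewrite addrA. Qed.

Lemma mulsDr x y z : x ⊗ (y ⊕ z) = x ⊗ y ⊕ x ⊗ z.
Proof.
by case: x; case: y; case: z => //= *; rewrite /splus /= ?dle_add2l; dle_cases.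
Qed.

Lemma mulsDl x y z : (x ⊕ y) ⊗ z = x ⊗ z ⊕ y ⊗ z.
Proof. by rewrite mulsC mulsDr ![z ⊗ _]mulsC. Qed.

Lemma oppsK x : ⊖ ⊖ x = x. Proof. by case: x. Qed.

Lemma oppsD x y : ⊖ (x ⊕ y) = ⊖ x ⊕ ⊖ y.
Proof. by case: x; case: y => //= *; rewrite /splus /=; dle_cases. Qed.

Lemma mulNs x y : ⊖ x ⊗ y = ⊖ (x ⊗ y). Proof. by case: x; case: y. Qed.
Lemma mulsN x y : x ⊗ ⊖ y = ⊖ (x ⊗ y). Proof. by case: x; case: y. Qed.

Lemma mulN1s x : ⊖ 𝟙 ⊗ x = ⊖ x. Proof. by rewrite mulNs mul1s. Qed.

End SemiringLaws.

HB.instance Definition _ (G : DOAG) :=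
  Monoid.isComLaw.Build (Smax G) 𝟘 (@splus G) (@addsA G) (@addsC G) (@add0s G).
HB.instance Definition _ (G : DOAG) :=
  Monoid.isComLaw.Build (Smax G) 𝟙 (@stimes G) (@mulsA G) (@mulsC G) (@mul1s G).
HB.instance Definition _ (G : DOAG) :=
  Monoid.isMulLaw.Build (Smax G) 𝟘 (@stimes G) (@mul0s G) (@muls0 G).
HB.instance Definition _ (G : DOAG) :=
  Monoid.isAddLaw.Build (Smax G) (@stimes G) (@splus G) (@mulsDl G) (@mulsDr G).

Section SmaxEqType.
Variable G : DOAG.

Definition smax_code (x : Smax G) : option (nat * dg_car G) :=
  match x with
  | SZero => None | SPos a => Some (0, a) | SNeg a => Some (1, a) | SBal a => Some (2, a)
  end.

Definition smax_decode (c : option (nat * dg_car G)) : option (Smax G) :=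
  match c with
  | None => Some 𝟘 | Some (0, a) => Some (SPos a) | Some (1, a) => Some (SNeg a)
  | Some (2, a) => Some (SBal a) | _ => None
  end.

Lemma smax_codeK : pcancel smax_code smax_decode. Proof. by case. Qed.

End SmaxEqType.

HB.instance Definition _ (G : DOAG) := Equality.copy (Smax G) (pcan_type (@smax_codeK G)).

Section Modulus.
Variable G : DOAG.
Local Notation S := (Smax G).
Local Notation dle := (@dg_le G).
Implicit Types x y z c : S.

Definition modle x y := (x == 𝟘) || (y != 𝟘) && dle (smod x) (smod y).

Lemma modle_refl x : modle x x.
Proof. by case: x => //= a; apply: dg_le_refl. Qed.

Lemma modle_trans y x z : modle x y -> modle y z -> modle x z.
Proof.
by case: x => [|a|a|a]; case: y => [|b|b|b]; case: z => [|c|c|c] //=; exact: dg_le_trans.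
Qed.

Lemma modle_nge x y : ~~ modle x y -> modle y x.
Proof. by case: x => [|a|a|a]; case: y => [|b|b|b] //=; rewrite /modle /=; case: dleP. Qed.

Lemma muls_eq0 x y : (x ⊗ y == 𝟘) = (x == 𝟘) || (y == 𝟘).
Proof. by case: x; case: y. Qed.

Lemma smodM x y : x != 𝟘 -> y != 𝟘 -> smod (x ⊗ y) = (smod x + smod y)%R.
Proof. by case: x; case: y. Qed.

Lemma modleM x y x' y' : modle x y -> modle x' y' -> modle (x ⊗ x') (y ⊗ y').
Proof.
rewrite /modle !muls_eq0.
have [->|x0] //= := eqVneq x 𝟘; have [->|x'0] //= := eqVneq x' 𝟘; rewrite ?orbT //.
have [->|y0] //= := eqVneq y 𝟘; have [->|y'0] //= := eqVneq y' 𝟘.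
by rewrite !smodM //; apply: dle_add.
Qed.

Lemma modleM2r c x y : c != 𝟘 -> modle (x ⊗ c) (y ⊗ c) = modle x y.
Proof.
move=> c0; rewrite /modle !muls_eq0 (negbTE c0) !orbF.
have [->|x0] //= := eqVneq x 𝟘; have [->|y0] //= := eqVneq y 𝟘.
by rewrite !smodM // dle_add2r.
Qed.

Lemma modleNl x y : modle (⊖ x) y = modle x y. Proof. by case: x. Qed.
Lemma modleNr x y : modle x (⊖ y) = modle x y. Proof. by case: x; case: y. Qed.

Lemma modleD x y z : modle x z -> modle y z -> modle (x ⊕ y) z.
Proof. by case: x; case: y; case: z => //= *; rewrite /splus /=; dle_cases. Qed.

Lemma modle_addl x y : modle x (x ⊕ y).
Proof.
by case: x; case: y => //= *; rewrite /splus /=; dle_cases; rewrite /modle /= dg_le_refl.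
Qed.

Lemma modle_ltM x x' y y' : x != 𝟘 -> x' != 𝟘 ->
  ~~ modle y x -> modle x' y' -> ~~ modle (y ⊗ y') (x ⊗ x').
Proof.
move=> x0 x'0 hyx hxy'.
have y0 : y != 𝟘 by apply: contraNneq hyx => ->.
have y'0 : y' != 𝟘 by apply: contraTneq hxy' => ->; rewrite /modle (negbTE x'0).
move: hyx hxy'; rewrite /modle !muls_eq0 (negbTE x0) (negbTE x'0) (negbTE y0) (negbTE y'0) /=.
by rewrite !smodM //; apply: dlt_add.
Qed.

End Modulus.

Section Balance.
Variable G : DOAG.
Local Notation S := (Smax G).
Implicit Types x y z c : S.

Lemma sbalancedE x : sbalanced x = ~~ sinvertible x. Proof. by case: x. Qed.

Lemma sinvertibleE x : sinvertible x = ssigned x && (x != 𝟘). Proof. by case: x. Qed.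

Lemma sinvertible_neq0 x : sinvertible x -> x != 𝟘. Proof. by case: x. Qed.

Lemma sbalancedN x : sbalanced (⊖ x) = sbalanced x. Proof. by case: x. Qed.

Lemma sbalancedD x y : sbalanced x -> sbalanced y -> sbalanced (x ⊕ y).
Proof. by case: x; case: y => //= *; rewrite /splus /=; dle_cases. Qed.

Lemma sbalancedMl x y : sbalanced x -> sbalanced (x ⊗ y).
Proof. by case: x; case: y. Qed.

Lemma sbalancedMr x y : sbalanced y -> sbalanced (x ⊗ y).
Proof. by case: x; case: y. Qed.

Lemma sbalanced_subss x : sbalanced (x ⊕ ⊖ x).
Proof. by case: x => //= a; rewrite /splus /= dg_le_refl. Qed.

Lemma sbalancedMIr c x : sinvertible c -> sbalanced (x ⊗ c) -> sbalanced x.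
Proof. by case: c; case: x. Qed.

Lemma sbalanced_eq_opp x : x = ⊖ x -> sbalanced x.
Proof. by case: x => // a; case. Qed.

Lemma ssigned_balanced_eq0 x : ssigned x -> sbalanced x -> x = 𝟘.
Proof. by case: x. Qed.

Lemma sbalanced_absorb x y : sbalanced x -> modle y x -> sbalanced (x ⊕ y).
Proof.
by case: x => [|a|a|a]; case: y => [|b|b|b] //=; rewrite /splus /modle /=; dle_cases.
Qed.

Lemma adds_absorb x y : sinvertible x -> modle y x -> ~~ sbalanced (x ⊕ y) -> x ⊕ y = x.
Proof.
by case: x => [|a|a|a]; case: y => [|b|b|b] //=; rewrite /splus /modle /=; dle_cases.
Qed.

Lemma sbalanced_adds_le x y : sinvertible x -> modle y x -> sbalanced (x ⊕ y) ->
  y = ⊖ x \/ sbalanced y /\ modle x y.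
Proof.
case: x => [|a|a|a]; case: y => [|b|b|b] //=; rewrite /splus /modle /=; dle_cases;
  rewrite ?dg_le_refl; auto.
Qed.

Definition sdominated x y := ~~ modle y x || sbalanced (x ⊕ y).

Lemma sdominated_modle x y : sinvertible x -> sdominated x y -> modle x y.
Proof.
move=> hx /orP [/modle_nge //|hbal].
have [hyx|/modle_nge //] := boolP (modle y x).
by case: (sbalanced_adds_le hx hyx hbal) => [->|[]]; rewrite ?modleNr ?modle_refl.
Qed.

Lemma sdominated_eq x y : sinvertible x -> sdominated x y -> modle y x ->
  y = ⊖ x \/ sbalanced y.
Proof.
move=> hx + hyx; rewrite /sdominated hyx /= => hbal.
by case: (sbalanced_adds_le hx hyx hbal) => [|[]]; [left | right].
Qed.

Lemma sdominated0 x : sinvertible x -> ~~ sdominated x 𝟘.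
Proof. by move=> hx; rewrite /sdominated adds0 sbalancedE hx. Qed.

Lemma sbalMl c x y : x ∇ y -> c ⊗ x ∇ c ⊗ y.
Proof. by rewrite /sbal -mulsN -mulsDr; apply: sbalancedMr. Qed.

Lemma sbal_signed_eq x y : ssigned x -> ssigned y -> x ∇ y -> x = y.
Proof.
by rewrite /sbal; case: x => [|a|a|a]; case: y => [|b|b|b] //=; rewrite /splus /=; dle_cases.
Qed.

Lemma sinvertibleM x y : sinvertible (x ⊗ y) = sinvertible x && sinvertible y.
Proof. by case: x; case: y. Qed.

Lemma ssignedM x y : ssigned x -> ssigned y -> ssigned (x ⊗ y).
Proof. by case: x; case: y. Qed.

Definition sinv x : S :=
  match x with SPos a => SPos (- a)%R | SNeg a => SNeg (- a)%R | _ => x end.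

Lemma mulVs c : sinvertible c -> sinv c ⊗ c = 𝟙.
Proof. by case: c => //= a _; rewrite addNr. Qed.

Lemma sinvertibleV c : sinvertible c -> sinvertible (sinv c).
Proof. by case: c. Qed.

Lemma mulIs c : sinvertible c -> injective (@stimes G ^~ c).
Proof.
move=> hc x y /(congr1 (@stimes G ^~ (sinv c))) /=.
by rewrite -!mulsA [c ⊗ _]mulsC mulVs // !muls1.
Qed.

Definition ssign (b : bool) : S := if b then ⊖ 𝟙 else 𝟙.

Lemma ssignE (b : bool) x : ssign b ⊗ x = if b then ⊖ x else x.
Proof. by case: b; rewrite /ssign ?mulN1s ?mul1s. Qed.

Lemma ssignM (b1 b2 : bool) : ssign b1 ⊗ ssign b2 = ssign (b1 (+) b2).
Proof. by rewrite ssignE; case: b1; case: b2; rewrite /= ?oppsK. Qed.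

Lemma ssignN (b : bool) : ssign (~~ b) = ⊖ ssign b.
Proof. by case: b; rewrite /= ?oppsK. Qed.

Lemma modle_ssignl (b : bool) x y : modle (ssign b ⊗ x) y = modle x y.
Proof. by rewrite ssignE; case: b; rewrite ?modleNl. Qed.

Lemma modle_ssignr (b : bool) x y : modle x (ssign b ⊗ y) = modle x y.
Proof. by rewrite ssignE; case: b; rewrite ?modleNr. Qed.

Lemma sbalanced_ssign (b : bool) x : sbalanced (ssign b ⊗ x) = sbalanced x.
Proof. by rewrite ssignE; case: b; rewrite ?sbalancedN. Qed.

End Balance.
Arguments ssign {G} b.

Section BigOps.
Variables (G : DOAG) (I : finType).
Local Notation S := (Smax G).
Implicit Types (P : pred I) (f g : I -> S) (x z : S).

Lemma exists_modle_max (i0 : I) f : exists i, forall k, modle (f k) (f i).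
Proof.
suff [i hi] : exists i, forall k, k \in enum I -> modle (f k) (f i).
  by exists i => k; apply: hi; rewrite mem_enum.
elim: (enum I) => [|a s [i hi]]; first by exists i0.
have [hai|hia] := boolP (modle (f a) (f i)).
  by exists i => k; rewrite inE => /predU1P [->|/hi].
exists a => k; rewrite inE => /predU1P [->|/hi hki]; first exact: modle_refl.
exact: modle_trans hki (modle_nge hia).
Qed.

Lemma modle_sum P f z :
  (forall k, P k -> modle (f k) z) -> modle (\big[@splus G/𝟘]_(k | P k) f k) z.
Proof. by move=> h; apply: (big_ind (fun w => modle w z)) => // *; apply: modleD. Qed.

Lemma opps_sum P f : ⊖ (\big[@splus G/𝟘]_(k | P k) f k) = \big[@splus G/𝟘]_(k | P k) ⊖ f k.
Proof. exact: (big_morph _ (@oppsD G) (erefl (⊖ 𝟘))). Qed.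

Lemma sum_balanced_max_balanced f i :
  (forall k, modle (f k) (f i)) -> sbalanced (f i) -> sbalanced (\big[@splus G/𝟘]_k f k).
Proof.
move=> hmax hbal; rewrite (bigD1 i) //=.
by apply: sbalanced_absorb => //; apply: modle_sum.
Qed.

Lemma sum_balanced_max_cancel f i j : j != i ->
  (forall k, modle (f k) (f i)) -> f j = ⊖ f i -> sbalanced (\big[@splus G/𝟘]_k f k).
Proof.
move=> hji hmax hfj; rewrite (bigD1 i) //= (bigD1 j) 1?addsA /=; last by rewrite hji.
rewrite hfj; apply: sbalanced_absorb; first exact: sbalanced_subss.
by apply: modle_sum => k _; apply: modle_trans (hmax k) (modle_addl _ _).
Qed.

Lemma sum_balanced_partner f i :
  sinvertible (f i) -> sbalanced (\big[@splus G/𝟘]_k f k) ->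
  exists2 k, k != i & sdominated (f i) (f k).
Proof.
move=> hi; rewrite (bigD1 i) //=.
have [/existsP [k /andP [hk hc]] _|/existsPn hnone] :=
  boolP [exists k, (k != i) && sdominated (f i) (f k)].
  by exists k.
suff -> : f i ⊕ \big[@splus G/𝟘]_(k | k != i) f k = f i by rewrite sbalancedE hi.
apply: (big_ind (fun w => f i ⊕ w = f i)) => [|u w hu hw|k hk]; first exact: adds0.
  by rewrite addsA hu hw.
move: (hnone k); rewrite hk /sdominated negb_or negbK => /andP [hle hnb].
exact: adds_absorb.
Qed.

Lemma modle_prod P f g : (forall k, P k -> modle (f k) (g k)) ->
  modle (\big[@stimes G/𝟙]_(k | P k) f k) (\big[@stimes G/𝟙]_(k | P k) g k).
Proof.
move=> h; apply: (big_ind2 (fun u w => modle u w)) => //; first exact: modle_refl.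
by move=> *; apply: modleM.
Qed.

Lemma sinvertible_prod P f :
  sinvertible (\big[@stimes G/𝟙]_(k | P k) f k) = [forall (k | P k), sinvertible (f k)].
Proof. by rewrite -big_andE (big_morph _ (@sinvertibleM G) (erefl (sinvertible 𝟙))). Qed.

Lemma sbalanced_prod P f k : P k -> sbalanced (f k) ->
  sbalanced (\big[@stimes G/𝟙]_(k | P k) f k).
Proof. by move=> hk hb; rewrite (bigD1 k) //=; apply: sbalancedMl. Qed.

Lemma prod_opps P f :
  \big[@stimes G/𝟙]_(k | P k) ⊖ f k = ssign (odd #|P|) ⊗ \big[@stimes G/𝟙]_(k | P k) f k.
Proof.
under eq_bigr do rewrite -mulN1s.
rewrite big_split /= big_const; congr (_ ⊗ _).
by elim: #|P| => // m IH; rewrite iterS IH mulN1s /ssign /=; case: (odd m); rewrite ?oppsK.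
Qed.

Lemma modle_prod_each P f g : (forall k, P k -> sinvertible (f k)) ->
  (forall k, P k -> modle (f k) (g k)) ->
  modle (\big[@stimes G/𝟙]_(k | P k) g k) (\big[@stimes G/𝟙]_(k | P k) f k) ->
  forall k, P k -> modle (g k) (f k).
Proof.
move=> hf hfg hprod k hk; apply/negPn/negP => hlt; move: hprod.
rewrite (bigD1 k hk) [X in modle _ X](bigD1 k hk) /=; apply/negP.
apply: modle_ltM hlt _; first exact/sinvertible_neq0/hf.
  by apply/sinvertible_neq0; rewrite sinvertible_prod; apply/forall_inP => i /andP [/hf].
by apply: modle_prod => i /andP [/hfg].
Qed.

End BigOps.

Lemma lift_perm_onto n (i j : 'I_n.+1) :
  {on [pred s : 'S_n.+1 | s i == j], bijective (lift_perm i j)}.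
Proof.
pose restr p (s : 'S_n.+1) (k : 'I_n) : 'I_n := odflt k (unlift (s p) (s (lift p k))).
have restrK p (s : 'S_n.+1) k : lift (s p) (restr p s k) = s (lift p k).
  rewrite /restr; have := neq_lift p k.
  by rewrite -(can_eq (permK s)) => /unlift_some[] ? ? ->.
have restr_inj : injective (restr i _).
  move=> s; apply: can_inj (restr (s i) s^-1%g) _ => k'.
  by rewrite {1}/restr restrK !permK liftK.
exists (fun s => perm (restr_inj s)) => [s _ | s].
  by apply/permP => k'; rewrite permE /restr lift_perm_lift lift_perm_id liftK.
move/(s _ =P _) => sij; apply/permP => k.
case: (unliftP i k) => [k'|] ->; rewrite ?lift_perm_id //.
by rewrite lift_perm_lift -sij permE restrK.
Qed.

Section Determinant.
Variable G : DOAG.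
Local Notation S := (Smax G).

Definition sweight n (M : 'M[S]_n) (s : 'S_n) : S := \big[@stimes G/𝟙]_k M k (s k).

Definition sterm n (M : 'M[S]_n) (s : 'S_n) : S := ssign (odd_perm s) ⊗ sweight M s.

Lemma sdetE n (M : 'M[S]_n) : sdet M = \big[@splus G/𝟘]_s sterm M s.
Proof. by []. Qed.

Definition sminor n (M : 'M[S]_n) (i j : 'I_n) : 'M[S]_n.-1 :=
  \matrix_(k, l) M (lift i k) (lift j l).

Definition scofactor n (M : 'M[S]_n) (i j : 'I_n) : S :=
  ssign (odd (i + j)) ⊗ sdet (sminor M i j).

Lemma sadjE n (M : 'M[S]_n) i j : sadj M i j = scofactor M j i.
Proof. by rewrite mxE /scofactor addnC. Qed.

Lemma expand_scofactor n (M : 'M[S]_n) i j :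
  scofactor M i j =
  \big[@splus G/𝟘]_(s : 'S_n | s i == j)
     (ssign (odd_perm s) ⊗ \big[@stimes G/𝟙]_(k | i != k) M k (s k)).
Proof.
case: n M i j => [|n] M i j; first by case: i.
rewrite (reindex _ (lift_perm_onto i j)) /scofactor sdetE big_distrr /=.
apply: eq_big => [s | s _]; first by rewrite lift_perm_id eqxx.
rewrite mulsA ssignM oddD -odd_lift_perm /sweight; congr (_ ⊗ _).
case: (pickP 'I_n) => [k0 _ | n0]; last first.
  by rewrite !big1 // => [k /unlift_some[k'] | k' _]; have := n0 k'.
rewrite (reindex (lift i)).
  by apply: eq_big => [k | k _] /=; rewrite ?neq_lift // !mxE lift_perm_lift.
exists (fun k => odflt k0 (unlift i k)) => k; first by rewrite liftK.
by case/unlift_some => k' -> ->.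
Qed.

Lemma expand_sdet_row n (M : 'M[S]_n) i :
  sdet M = \big[@splus G/𝟘]_j (M i j ⊗ scofactor M i j).
Proof.
rewrite sdetE (partition_big (fun s : 'S_n => s i) predT) //=.
apply: eq_bigr => j _; rewrite expand_scofactor big_distrr /=.
apply: eq_bigr => s /eqP sij; rewrite /sterm /sweight (bigD1 i) //= sij.
rewrite mulsA [_ ⊗ M i j]mulsC -mulsA; do 2!congr (_ ⊗ _).
by apply: eq_bigl => k; rewrite eq_sym.
Qed.

Lemma sdet_row_subst n (M : 'M[S]_n) (j : 'I_n) (z : 'I_n -> S) :
  sdet (\matrix_(r, m) if r == j then z m else M r m) =
  \big[@splus G/𝟘]_m (z m ⊗ sadj M m j).
Proof.
rewrite (expand_sdet_row _ j); apply: eq_bigr => m _; rewrite mxE eqxx sadjE.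
congr (_ ⊗ (_ ⊗ sdet _)); apply/matrixP => k l.
by rewrite !mxE eq_sym (negbTE (neq_lift _ _)).
Qed.

Lemma sdet_balanced_eq_rows n (M : 'M[S]_n) (r j : 'I_n) : r != j ->
  (forall m, M r m = M j m) -> sbalanced (sdet M).
Proof.
move=> hrj hM; apply: sbalanced_eq_opp.
rewrite sdetE {1}(reindex_inj (mulgI (tperm r j))) opps_sum /=.
apply: eq_bigr => s _; rewrite /sterm odd_mul_tperm hrj ssignN mulNs; congr (⊖ (_ ⊗ _)).
rewrite /sweight (reindex_inj (@perm_inj _ (tperm r j))) /=.
apply: eq_bigr => i _; rewrite permM tpermK.
by case: tpermP => [->|->|//]; rewrite ?hM.
Qed.

Lemma sweight_split n (M : 'M[S]_n) (x : 'I_n -> S) (s : 'S_n) (C : pred 'I_n) :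
  sweight M s ⊗ \big[@stimes G/𝟙]_(k | C k) x (s k) =
  \big[@stimes G/𝟙]_(k | ~~ C k) M k (s k) ⊗ \big[@stimes G/𝟙]_(k | C k) (M k (s k) ⊗ x (s k)).
Proof. by rewrite /sweight (bigID C) big_split /= mulsA; congr (_ ⊗ _); rewrite mulsC. Qed.

End Determinant.

Section CyclePerm.
Variable T : finType.
Implicit Types (l : seq T) (F : T -> T).

Fixpoint cycle_perm l : {perm T} :=
  if l is a :: ((b :: _) as l') then (cycle_perm l' * tperm a b)%g else 1%g.

Lemma cycle_permE l : uniq l -> cycle_perm l =1 next l.
Proof.
elim: l => [|a l IH] ul x; first by rewrite perm1.
case: l IH ul => [|b l] IH; first by rewrite perm1 /=; case: eqP => // ->.
case/andP => ha ubl.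
have /norP [hab hal] : ~~ ((a == b) || (a \in l)) by rewrite -in_cons.
have hbl : b \notin l by case/andP: ubl.
have -> : cycle_perm [:: a, b & l] = (cycle_perm (b :: l) * tperm a b)%g by [].
rewrite permM IH // !next_nth.
have [->|xa] := eqVneq x a; first by rewrite (negbTE ha) mem_head /= eqxx tpermL.
rewrite [x \in a :: _]in_cons (negbTE xa) orFb.
have [xbl|xbl] := boolP (x \in b :: l); last first.
  have bx : b != x by apply: contraNneq xbl => ->; exact: mem_head.
  by rewrite tpermD // eq_sym.
have -> : index x [:: a, b & l] = (index x (b :: l)).+1.
  by rewrite [LHS]/= eq_sym (negbTE xa).
have : index x (b :: l) < (size l).+1 by rewrite index_mem.
rewrite ltnS leq_eqVlt => /orP [/eqP ->|lti]; first by rewrite !nth_default // tpermR.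
rewrite [nth a _ _]/= (set_nth_default a) // tpermD //.
  by apply: contraNneq hal => ->; rewrite mem_nth.
by apply: contraNneq hbl => ->; rewrite mem_nth.
Qed.

Lemma odd_cycle_perm l : uniq l -> odd_perm (cycle_perm l) = odd (size l).-1.
Proof.
elim: l => [|a l IH] ul; first by rewrite odd_perm1.
case: l IH ul => [|b l] IH; first by rewrite odd_perm1.
rewrite [uniq _]/= inE negb_or => /andP [/andP [hab _] ubl].
by rewrite [cycle_perm _]/= odd_permM IH // odd_tperm hab /= addbT.
Qed.

Lemma exists_fcycle F (P : pred T) x0 : P x0 -> (forall x, P x -> P (F x)) ->
  exists l, [/\ uniq l, l != [::], {subset l <= P} & {in l, F =1 next l}].
Proof.
move=> Px0 PF; have Piter k : P (iter k F x0) by elim: k => //= k /PF.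
have /trajectP [i lti ei] := looping_order F x0.
set y := iter i F x0.
have ycyc : fcycle F (fingraph.orbit F y).
  apply: (all_iffLR orbitPcycle 3 0); exists (fingraph.order F x0 - i).-1.
  by rewrite prednK ?subn_gt0 // /y -iterD subnK ?(ltnW lti) // -ei.
exists (fingraph.orbit F y); split; first exact: fingraph.orbit_uniq.
- by apply/eqP => e; have := fingraph.in_orbit F y; rewrite e.
- by move=> w; rewrite -fconnect_orbit => /iter_findex <-; rewrite /y -iterD; exact: Piter.
- by move=> w wy; apply/eqP; apply: (next_cycle ycyc wy).
Qed.

End CyclePerm.

Section CycleExchange.
Variables (G : DOAG) (n : nat) (M : 'M[Smax G]_n) (x : 'I_n -> Smax G).
Variables (sigma : 'S_n) (l : seq 'I_n).

Hypothesis x_signed : forall m, ssigned (x m).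
Hypothesis sigma_max : forall s, modle (sweight M s) (sweight M sigma).
Hypothesis sigma_invertible : sinvertible (sweight M sigma).
Hypotheses (l_uniq : uniq l) (l_nil : l != [::]).
Hypothesis l_support : {in l, forall m, x m != 𝟘}.
Hypothesis l_moves : {in l, forall m, next l m != m}.
Hypothesis l_dominated : {in l, forall m, let r := (sigma^-1)%g m in
  sdominated (M r m ⊗ x m) (M r (next l m) ⊗ x (next l m))}.

Let tau := (sigma * cycle_perm l)%g.
Let a r := M r (sigma r) ⊗ x (sigma r).
Let b r := M r (tau r) ⊗ x (tau r).
Let X := \big[@stimes G/𝟙]_(r | sigma r \in l) x (sigma r).
Let R := \big[@stimes G/𝟙]_(r | sigma r \notin l) M r (sigma r).

Let tauE r : tau r = next l (sigma r).
Proof. by rewrite permM cycle_permE. Qed.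

Let tau_notin r : sigma r \notin l -> tau r = sigma r.
Proof. by rewrite tauE next_nth => /negbTE ->. Qed.

Let tau_neq_sigma : tau != sigma.
Proof.
have [m ml] : exists m, m \in l by case: l l_nil => // m l' _; exists m; rewrite mem_head.
apply/eqP => /permP /(_ ((sigma^-1)%g m)); rewrite tauE permKV.
exact/eqP/l_moves.
Qed.

Let odd_tau : odd_perm tau = ~~ odd (size l) (+) odd_perm sigma.
Proof.
rewrite odd_permM odd_cycle_perm // addbC; case: l l_nil => //= m l' _.
by rewrite negbK.
Qed.

Let a_invertible r : sigma r \in l -> sinvertible (a r).
Proof.
move=> hr; rewrite sinvertibleM [sinvertible (x _)]sinvertibleE x_signed l_support // andbT.
by move: sigma_invertible; rewrite /sweight sinvertible_prod => /forall_inP ->.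
Qed.

Let R_invertible : sinvertible R.
Proof.
move: sigma_invertible; rewrite /sweight !sinvertible_prod => /forall_inP hall.
by apply/forall_inP => r _; apply: hall.
Qed.

Let X_invertible : sinvertible X.
Proof. by rewrite sinvertible_prod; apply/forall_inP => r hr; rewrite sinvertibleE x_signed l_support. Qed.

Let a_dominated r : sigma r \in l -> sdominated (a r) (b r).
Proof. by move=> hr; have := l_dominated hr; rewrite permK /= -tauE. Qed.

(* Multiplying by X lets the weights of sigma and tau be compared factor by
   factor on the rows of the cycle. *)
Let sweight_sigma : sweight M sigma ⊗ X = R ⊗ \big[@stimes G/𝟙]_(r | sigma r \in l) a r.
Proof. exact: sweight_split. Qed.

Let sweight_tau : sweight M tau ⊗ X = R ⊗ \big[@stimes G/𝟙]_(r | sigma r \in l) b r.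
Proof.
have -> : X = \big[@stimes G/𝟙]_(r | sigma r \in l) x (tau r).
  transitivity (\big[@stimes G/𝟙]_(m | m \in l) x m).
    by rewrite [RHS](reindex_inj (@perm_inj _ sigma)).
  by rewrite (reindex_inj (@perm_inj _ tau)); apply: eq_bigl => r; rewrite tauE mem_next.
by rewrite sweight_split; congr (_ ⊗ _); apply: eq_bigr => r /tau_notin ->.
Qed.

Let modle_b_a r : sigma r \in l -> modle (b r) (a r).
Proof.
move: r; apply: (@modle_prod_each G _ (fun k => sigma k \in l) a b) => [k /a_invertible //|k hk|].
  exact: sdominated_modle (a_invertible hk) (a_dominated hk).
rewrite -(modleM2r _ _ (sinvertible_neq0 R_invertible)) ![_ ⊗ R]mulsC.
rewrite -sweight_sigma -sweight_tau modleM2r //; exact: sinvertible_neq0 X_invertible.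
Qed.

Lemma sdet_balanced_of_cycle : sbalanced (sdet M).
Proof.
have term_max s : modle (sterm M s) (sterm M sigma).
  by rewrite /sterm modle_ssignl modle_ssignr.
have [[r hr hbr]|hopp] : (exists2 r, sigma r \in l & sbalanced (b r)) \/
                         (forall r, sigma r \in l -> b r = ⊖ a r).
  have [/exists_inP [r hr hb]|/exists_inPn hnb] :=
    boolP [exists (r | sigma r \in l), sbalanced (b r)]; [left; exists r | right] => // r hr.
  case: (sdominated_eq (a_invertible hr) (a_dominated hr) (modle_b_a hr)) => // hb.
  by move: (hnb r hr); rewrite hb.
- have tau_balanced : sbalanced (sweight M tau).
    apply: (sbalancedMIr X_invertible); rewrite sweight_tau.
    by apply/sbalancedMr/(sbalanced_prod (P := fun k => sigma k \in l) hr).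
  have sigma_le_tau : modle (sweight M sigma) (sweight M tau).
    rewrite -(modleM2r _ _ (sinvertible_neq0 X_invertible)) sweight_sigma sweight_tau.
    apply: modleM (modle_refl _) (modle_prod _) => k hk.
    exact: sdominated_modle (a_invertible hk) (a_dominated hk).
  apply: (sum_balanced_max_balanced (i := tau)); last by rewrite sbalanced_ssign.
  move=> s; rewrite modle_ssignl modle_ssignr.
  exact: modle_trans (sigma_max s) sigma_le_tau.
have card_l : #|[pred r | sigma r \in l]| = size l.
  rewrite -(card_uniqP l_uniq) -!sum1_card.
  by rewrite [RHS](reindex_inj (@perm_inj _ sigma)).
have tau_weight : sweight M tau = ssign (odd (size l)) ⊗ sweight M sigma.
  apply: (mulIs X_invertible); rewrite -mulsA sweight_sigma sweight_tau.
  rewrite (eq_bigr _ hopp) prod_opps card_l.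
  by rewrite !mulsA [R ⊗ _]mulsC.
apply: (sum_balanced_max_cancel tau_neq_sigma term_max).
rewrite /sterm tau_weight odd_tau mulsA ssignM -mulNs -ssignN.
by congr (ssign _ ⊗ _); case: (odd (size l)); case: (odd_perm sigma).
Qed.

End CycleExchange.

Lemma sdet_balanced_of_kernel (G : DOAG) n (M : 'M[Smax G]_n) (x : 'I_n -> Smax G) :
  (forall m, ssigned (x m)) -> (exists m, x m != 𝟘) ->
  (forall r, sbalanced (\big[@splus G/𝟘]_m (M r m ⊗ x m))) -> sbalanced (sdet M).
Proof.
move=> x_signed [m0 xm0] Mx_balanced.
have [sigma sigma_max] := exists_modle_max 1%g (sweight M).
have [sigma_inv|] := boolP (sinvertible (sweight M sigma)); last first.
  rewrite -sbalancedE => sigma_bal; rewrite sdetE.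
  apply: (sum_balanced_max_balanced (i := sigma)); last by rewrite sbalanced_ssign.
  by move=> s; rewrite /sterm modle_ssignl modle_ssignr.
(* The invertible term of row sigma^-1 m is matched, in that balanced row, by
   the term of some column m' in the support: the successor of m. *)
have successor m : exists m', x m != 𝟘 ->
    [/\ m' != m, x m' != 𝟘 & let r := (sigma^-1)%g m in
                            sdominated (M r m ⊗ x m) (M r m' ⊗ x m')].
  have [xm|_] := boolP (x m != 𝟘); last by exists m.
  set r := (sigma^-1)%g m.
  have a_inv : sinvertible (M r m ⊗ x m).
    rewrite sinvertibleM [sinvertible (x m)]sinvertibleE x_signed xm !andbT.
    move: sigma_inv; rewrite /sweight sinvertible_prod => /forall_inP /(_ r isT).
    by rewrite /r permKV.
  have [m' m'm hdom] := sum_balanced_partner a_inv (Mx_balanced r).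
  exists m' => _; split => //.
  by apply: contraNneq (sdominated0 a_inv) => xm'0; rewrite -(muls0 (M r m')) -xm'0.
have [F hF] := fin_all_exists successor.
have [l [l_uniq l_nil l_supp l_next]] :=
  exists_fcycle (P := [pred m | x m != 𝟘]) xm0 (fun m xm => let: And3 _ h _ := hF m xm in h).
apply: (sdet_balanced_of_cycle (sigma := sigma) (l := l)) => // m ml;
  have [] := hF m (l_supp m ml); rewrite l_next //.
Qed.

Section AdjugateColumns.
Variables (G : DOAG) (n : nat) (A : 'M[Smax G]_n) (g : Smax G).
Local Notation S := (Smax G).
Local Notation B := (smsub (sid_scale n g) A).

Lemma sum_supported2 (i k : 'I_n) (p q : S) (h : 'I_n -> S) : i != k ->
  \big[@splus G/𝟘]_m ((if m == i then p else if m == k then q else 𝟘) ⊗ h m)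
  = p ⊗ h i ⊕ q ⊗ h k.
Proof.
move=> ik; rewrite (bigD1 i) //= eqxx (bigD1 k) /=; last by rewrite eq_sym.
rewrite eqxx (negbTE (_ : k != i)) 1?eq_sym // big1 ?adds0 ?addsA //.
by move=> m /andP [mi mk]; rewrite (negbTE mi) (negbTE mk).
Qed.

Lemma sbal_smulv_smsub (w : 'I_n -> S) r :
  (smulv A w r ∇ g ⊗ w r) = sbalanced (smulv B w r).
Proof.
have -> : smulv B w r = g ⊗ w r ⊕ ⊖ smulv A w r.
  rewrite /smulv opps_sum.
  rewrite (eq_bigr (fun m => (if r == m then g else 𝟘) ⊗ w m ⊕ ⊖ (A r m ⊗ w m))); last first.
    by move=> m _; rewrite !mxE mulsDl mulNs.
  rewrite big_split /= (bigD1 r) //= eqxx big1 ?adds0 // => m.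
  by rewrite eq_sym => /negbTE ->.
by rewrite /sbal -sbalancedN oppsD oppsK addsC.
Qed.

Lemma adj_col_cross_bal (v : 'I_n -> S) : is_seigenvector A g v ->
  forall i j k, sadj B i j ⊗ v k ∇ v i ⊗ sadj B k j.
Proof.
move=> [v_signed [[m0 vm0] Av_bal]] i j k.
have [<-|ik] := eqVneq i k; first by rewrite mulsC /sbal sbalanced_subss.
pose z m := if m == i then v k else if m == k then ⊖ v i else 𝟘.
have := @sdet_balanced_of_kernel _ _ (\matrix_(r, m) if r == j then z m else B r m) v v_signed.
rewrite sdet_row_subst sum_supported2 // mulNs [v k ⊗ _]mulsC; apply.
  by exists m0; apply/eqP.
move=> r; under eq_bigr do rewrite mxE.
case: eqP => _; last by rewrite -sbal_smulv_smsub; apply: Av_bal.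
by rewrite sum_supported2 // mulNs mulsC sbalanced_subss.
Qed.

Lemma adj_col_scaled (v : 'I_n -> S) : is_seigenvector A g v ->
  forall i j, sinvertible (sadj B i j) ->
  exists lam, sinvertible lam /\ sbalv v (fun k => lam ⊗ sadj B k j).
Proof.
move=> hv i j ci; have [v_signed [[m0 vm0] _]] := hv.
have cross := adj_col_cross_bal hv i j.
have vi : v i != 𝟘.
  apply: contra_notN vm0 => /eqP vi0; have := cross m0.
  rewrite vi0 mul0s /sbal /= adds0 mulsC => /(sbalancedMIr ci).
  exact: ssigned_balanced_eq0.
exists (v i ⊗ sinv (sadj B i j)); split.
  by rewrite sinvertibleM sinvertibleV // sinvertibleE v_signed vi.
move=> k; have := sbalMl (sinv (sadj B i j)) (cross k).
by rewrite !mulsA mulVs // mul1s [sinv _ ⊗ v i]mulsC.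
Qed.

Lemma adj_col_kernel : is_seigenvalue A g ->
  forall j r, sbalanced (smulv B (fun k => sadj B k j) r).
Proof.
move=> [_ hdet] j r; rewrite /smulv -(sdet_row_subst B j (fun m => B r m)).
have [->|rj] := eqVneq r j; last first.
  by apply: (sdet_balanced_eq_rows rj) => m; rewrite !mxE eqxx (negbTE rj).
have -> : (\matrix_(r', m) (if r' == j then B j m else B r' m))%R = B.
  by apply/matrixP => r' m; rewrite mxE; case: eqP => // ->.
by move: hdet; rewrite /sbal /= adds0.
Qed.

End AdjugateColumns.

Theorem theorem3p36 (G : DOAG) (n : nat) (A : 'M[Smax G]_n) (g : Smax G)
    (v : 'I_n -> Smax G) :
  is_seigenvalue A g ->
  is_seigenvector A g v ->
  let B := sadj (smsub (sid_scale n g) A) in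
  (forall i j : 'I_n, sinvertible (B i j) ->
     exists lam : Smax G, sinvertible lam /\
       sbalv v (fun k => stimes lam (B k j))) /\
  (forall j : 'I_n, (forall k, ssigned (B k j)) -> (exists k, B k j <> SZero) ->
     is_seigenvector A g (fun k => B k j) /\
     exists lam : Smax G, sinvertible lam /\
       (forall k, v k = stimes lam (B k j))).
Proof.
move=> hg hv B; split; first exact: adj_col_scaled.
move=> j c_signed [k0 ck0].
have ck0_inv : sinvertible (B k0 j) by rewrite sinvertibleE c_signed; apply/eqP.
split.
  split=> //; split; first by exists k0.
  by move=> r; rewrite sbal_smulv_smsub; apply: adj_col_kernel.
have [lam [lam_inv v_bal]] := adj_col_scaled hv ck0_inv.
exists lam; split=> // k; apply: sbal_signed_eq (v_bal k); first by case: hv.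
move: lam_inv; rewrite sinvertibleE => /andP [lam_signed _].
exact: ssignedM lam_signed (c_signed k).
Qed.
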